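(* Let $a\in\{-2,-1,0,1,2\}$. As formal power series in $q$ and $x$, $$\sum_{t\geq0} \widetilde{U}_t(a,q)x^t=\prod_{n=1}^{\infty}\frac{1}{(1+aq^{2n-1}+q^{2(2n-1)})(1-q^{2n})}\cdot \left(1+2\sum_{n\geq 1}te_n\left(\frac{x+a+2}{4}\right)q^{n^2}\right).$$
   Context: For $a\in\{-2,-1,0,1,2\}$ and integer $t\geq 0$, $\widetilde{U}_t(a,q)=\sum \prod_{k=1}^t \frac{q^{n_k}}{1+aq^{n_k}+q^{2n_k}}$, where the sum runs over all $t$-tuples of odd positive integers $n_1<n_2<\cdots<n_t$ (so $\widetilde{U}_0(a,q)=1$). $T_m$ denotes the Chebyshev polynomial of the first kind, $T_m(\cos\theta)=\cos(m\theta)$, and $te_n(x):=T_{2n}(\sqrt{x})$ (a polynomial in $x$). *)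

From HB Require Import structures.
From mathcomp Require Import all_boot all_order all_algebra.
Set Implicit Arguments. Unset Strict Implicit. Unset Printing Implicit Defensive.
Import Order.TTheory GRing.Theory Num.Theory.
Local Open Scope ring_scope.

(* formal power series in q with coefficients in A: f k = [q^k] f *)
Definition fps (A : Type) := nat -> A.

Definition fps_of_poly {A : nzRingType} (p : {poly A}) : fps A := fun k => p`_k.

Definition fone {A : nzRingType} : fps A := fun k => (k == 0%N)%:R.

Definition fmul {A : nzRingType} (f g : fps A) : fps A :=
  fun n => \sum_(i < n.+1) f i * g (n - i)%N.

(* coefficients g_0..g_n of the multiplicative inverse of f (f 0 a unit) *)
Fixpoint finv_seq {A : unitRingType} (f : fps A) (n : nat) : seq A :=
  match n with
  | 0 => [:: (f 0%N)^-1]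
  | m.+1 => let s := finv_seq f m in
            rcons s (- (f 0%N)^-1 * \sum_(i < m.+1) f (m.+1 - i)%N * nth 0 s i)
  end.

Definition finv {A : unitRingType} (f : fps A) : fps A :=
  fun n => nth 0 (finv_seq f n) n.

(* Chebyshev polynomials of the first kind: T_0 = 1, T_1 = X,
   T_{m+2} = 2 X T_{m+1} - T_m  (so T_m(cos t) = cos(m t)) *)
Fixpoint cheb_pair (m : nat) : {poly rat} * {poly rat} :=
  match m with
  | 0 => (1, 'X)
  | m'.+1 => let (p, q) := cheb_pair m' in (q, 2%:R *: 'X * q - p)
  end.
Definition chebT (m : nat) : {poly rat} := (cheb_pair m).1.

(* te_n(x) := T_{2n}(sqrt x): T_{2n} is even, te_n collects its even coefficients *)
Definition te (n : nat) : {poly rat} := even_poly (chebT n.*2).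

Definition ufac (a : int) (n : nat) : fps rat :=
  fmul (fps_of_poly 'X^n)
       (finv (fps_of_poly (1 + a%:~R *: 'X^n + 'X^(n.*2)))).

(* [q^N] Utilde_t(a,q): sum over t-sets of odd positive integers n_1<..<n_t;
   only those with all n_k <= N contribute to the coefficient of q^N,
   since the term has q-order n_1+...+n_t. *)
Definition Ucoef (a : int) (t N : nat) : rat :=
  \sum_(S : {set 'I_N.+1} | (#|S| == t) && [forall i in S, odd i])
     (\big[fmul/fone]_(i in S) ufac a i) N.

Definition pfac (a : int) (n : nat) : fps rat :=
  fmul (finv (fps_of_poly (1 + a%:~R *: 'X^(n.*2.-1) + 'X^((n.*2.-1).*2))))
       (finv (fps_of_poly (1 - 'X^(n.*2)))).

(* infinite product prod_{n>=1} pfac a n; factors with n > N are 1 + O(q^{N+1}) *)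
Definition Pprod (a : int) : fps rat :=
  fun N => (\big[fmul/fone]_(1 <= n < N.+1) pfac a n) N.

Definition Sser (a : int) : fps {poly rat} :=
  fun N => (N == 0%N)%:R +
    2%:R * \sum_(1 <= n < N.+1 | (n * n == N)%N)
             (te n \Po ((4%:R)^-1 *: ('X + ((a + 2)%:~R)%:P))).

Definition rhs (a : int) : fps {poly rat} :=
  fun N => \sum_(i < N.+1) (Pprod a i)%:P * Sser a (N - i)%N.

(* Since 1 + x q^n / (1 + a q^n + q^2n) = (1 + u q^n + q^2n) / (1 + a q^n + q^2n)
   with u = x + a, the series sum_t Utilde_t(a,q) x^t is the product over odd n
   of 1 + u q^n + q^2n, divided by the same product at u = a.  The finite Jacobi
   triple product
     2 prod_(j < M) (1 + u q^(2j+1) + q^(4j+2))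
       = sum_(i <= 2M) [2M, i]_(q^2) q^((i-M)^2) D_|i-M|(u),
   with D_n(u) = 2 T_n(u/2) the Dickson polynomials, and the congruence
   (q^2;q^2)_M [2M, M+k]_(q^2) = 1 + O(q^(2(M-|k|+1))) show that (q^2;q^2)_M times
   the product over odd n < 2M agrees up to q^M with 1 + sum_(n>=1) D_n(u) q^(n^2).
   Finally D_n(x+a) = 2 te_n((x+a+2)/4) because T_2n(sqrt y) = T_n(2y - 1). *)

From Pilot Require Import Defs.
From mathcomp Require Import all_boot all_order all_algebra.
From mathcomp Require Import zify ring.
Import Order.TTheory GRing.Theory Num.Theory.
Set Implicit Arguments. Unset Strict Implicit. Unset Printing Implicit Defensive.
Local Open Scope ring_scope.

Section EqmodX.
Variable R : comNzRingType.
Implicit Types (m : nat) (p r s w : {poly R}).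

Definition eqmodX m p r := forall i, (i < m)%N -> p`_i = r`_i.

Lemma eqmodX_refl m p : eqmodX m p p. Proof. by []. Qed.

Lemma eqmodX_sym m p r : eqmodX m p r -> eqmodX m r p.
Proof. by move=> h i hi; rewrite h. Qed.

Lemma eqmodX_trans m p r s : eqmodX m p r -> eqmodX m r s -> eqmodX m p s.
Proof. by move=> h1 h2 i hi; rewrite h1 // h2. Qed.

Lemma eqmodX_le m m' p r : (m' <= m)%N -> eqmodX m p r -> eqmodX m' p r.
Proof. by move=> hm h i hi; apply: h; apply: leq_trans hm. Qed.

Lemma eqmodXD m p p' r r' :
  eqmodX m p p' -> eqmodX m r r' -> eqmodX m (p + r) (p' + r').
Proof. by move=> h1 h2 i hi; rewrite !coefD h1 // h2. Qed.

Lemma eqmodXM m p p' r r' :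
  eqmodX m p p' -> eqmodX m r r' -> eqmodX m (p * r) (p' * r').
Proof.
move=> h1 h2 i hi; rewrite !coefM; apply: eq_bigr => -[j /= hj] _.
by rewrite h1 ?h2 //; lia.
Qed.

Lemma eqmodX_prod m (I : Type) (s : seq I) (P : pred I) (F G : I -> {poly R}) :
  (forall i, P i -> eqmodX m (F i) (G i)) ->
  eqmodX m (\prod_(i <- s | P i) F i) (\prod_(i <- s | P i) G i).
Proof. by move=> h; apply: big_ind2 => // *; apply: eqmodXM. Qed.

Lemma eqmodX_prod1 m (I : Type) (s : seq I) (P : pred I) (F : I -> {poly R}) :
  (forall i, P i -> eqmodX m (F i) 1) -> eqmodX m (\prod_(i <- s | P i) F i) 1.
Proof. by move=> h; have := @eqmodX_prod m I s P F (fun=> 1) h; rewrite big1_eq. Qed.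

Lemma eqmodX_Xn m n : (m <= n)%N -> eqmodX m 'X^n 0.
Proof. by move=> h i hi; rewrite coefXn coef0; case: eqP => // E; lia. Qed.

Lemma eqmodX_1DXn m n p : (m <= n)%N -> eqmodX m (1 + p * 'X^n) 1.
Proof.
move=> h; rewrite -[X in eqmodX _ _ X]addr0; apply: eqmodXD => //.
by rewrite -(mulr0 p); apply: eqmodXM => //; apply: eqmodX_Xn.
Qed.

Lemma eqmodX_mulXn m n p : eqmodX m p 1 -> eqmodX (m + n) (p * 'X^n) 'X^n.
Proof.
move=> h i hi; rewrite coefMXn coefXn; case: ltnP => hin.
  by case: eqP => // E; lia.
rewrite h ?coef1; last by lia.
by congr _%:R; apply/eqP/eqP; lia.
Qed.

Lemma eqmodX_cancel m p r w : w`_0 = 1 -> eqmodX m (p * w) (r * w) -> eqmodX m p r.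
Proof.
move=> w0 h i; elim/ltn_ind: i => i IH him.
have := h i him; rewrite !coefM !big_ord_recr /= subnn w0 !mulr1.
rewrite (eq_bigr (fun j : 'I_i => r`_j * w`_(i - j))); first by move/addrI.
by move=> [j /= hj] _; rewrite IH //; lia.
Qed.

Lemma eqmodX_inv1 m v d : eqmodX m (v * d) 1 -> eqmodX m d 1 -> eqmodX m v 1.
Proof.
move=> h1 h2; apply: eqmodX_trans h1.
by rewrite -{1}(mulr1 v); apply: eqmodXM => //; apply: eqmodX_sym.
Qed.

End EqmodX.

Lemma eqmodX_map (R S : comNzRingType) (f : {rmorphism R -> S}) m (p r : {poly R}) :
  eqmodX m p r -> eqmodX m (map_poly f p) (map_poly f r).
Proof. by move=> h i hi; rewrite !coef_map h. Qed.

Section FpsTruncation.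
Variable R : comNzRingType.
Implicit Types (N : nat) (f g : fps R) (p : {poly R}).

Definition fps_trunc N f : {poly R} := \poly_(i < N.+1) f i.

Lemma coef_fps_trunc N f k : (k <= N)%N -> (fps_trunc N f)`_k = f k.
Proof. by move=> hk; rewrite coef_poly ltnS hk. Qed.

Lemma fps_trunc_poly N p : eqmodX N.+1 (fps_trunc N (fps_of_poly p)) p.
Proof. by move=> k hk; rewrite coef_fps_trunc. Qed.

Lemma fps_trunc_one N : eqmodX N.+1 (fps_trunc N fone) 1.
Proof. by move=> k hk; rewrite coef_fps_trunc // coef1. Qed.

Lemma fps_truncM N f g :
  eqmodX N.+1 (fps_trunc N (fmul f g)) (fps_trunc N f * fps_trunc N g).
Proof.
move=> k hk; rewrite coef_fps_trunc // coefM; apply: eq_bigr => -[i /= hi] _.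
by rewrite !coef_fps_trunc //; lia.
Qed.

Lemma fps_trunc_big N (I : Type) (s : seq I) (P : pred I) (F : I -> fps R) :
  eqmodX N.+1 (fps_trunc N (\big[fmul/fone]_(i <- s | P i) F i))
              (\prod_(i <- s | P i) fps_trunc N (F i)).
Proof.
apply: (big_ind2 (fun f p => eqmodX N.+1 (fps_trunc N f) p)).
- exact: fps_trunc_one.
- move=> f1 p1 f2 p2 h1 h2; apply: eqmodX_trans (eqmodXM h1 h2).
  exact: fps_truncM.
- by [].
Qed.

Lemma coef_big_fmul N k (I : Type) (s : seq I) (P : pred I) (F : I -> fps R) :
  (k <= N)%N ->
  (\big[fmul/fone]_(i <- s | P i) F i) k = (\prod_(i <- s | P i) fps_trunc N (F i))`_k.
Proof. by move=> hk; rewrite -fps_trunc_big ?coef_fps_trunc. Qed.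

End FpsTruncation.

Section FpsInverse.
Variable R : comUnitRingType.
Implicit Types (f : fps R) (p : {poly R}).

Lemma size_finv_seq f n : size (finv_seq f n) = n.+1.
Proof. by elim: n => //= n IH; rewrite size_rcons IH. Qed.

Lemma nth_finv_seq f n i : (i <= n)%N -> nth 0 (finv_seq f n) i = Defs.finv f i.
Proof.
elim: n => [|n IH]; first by rewrite leqn0 => /eqP ->.
rewrite leq_eqVlt => /orP[/eqP -> // | hi].
by rewrite /= nth_rcons size_finv_seq hi IH.
Qed.

Lemma finvS f n :
  Defs.finv f n.+1 = - (f 0%N)^-1 * \sum_(i < n.+1) f (n.+1 - i)%N * Defs.finv f i.
Proof.
rewrite /Defs.finv /= nth_rcons size_finv_seq ltnn eqxx; congr (_ * _).
by apply: eq_bigr => -[i /= hi] _; rewrite nth_finv_seq.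
Qed.

Lemma fmul_finvl f : f 0%N \is a GRing.unit -> fmul (Defs.finv f) f =1 fone.
Proof.
move=> f0 [|n]; first by rewrite /fmul big_ord1 subnn /Defs.finv /= mulVr.
rewrite /fmul big_ord_recr /= subnn finvS mulrAC mulNr mulVr // mulN1r.
by apply/eqP; rewrite subr_eq0; apply/eqP/eq_bigr => i _; rewrite mulrC.
Qed.

Lemma fps_trunc_finv N p : p`_0 = 1 ->
  eqmodX N.+1 (fps_trunc N (Defs.finv (fps_of_poly p)) * p) 1.
Proof.
move=> p0; set v := fps_trunc N _.
have vp : eqmodX N.+1 (v * p) (v * fps_trunc N (fps_of_poly p)).
  exact/eqmodXM/eqmodX_sym/fps_trunc_poly.
apply: (eqmodX_trans vp); apply: (eqmodX_trans (eqmodX_sym (fps_truncM _ _))).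
move=> k hk; rewrite coef_fps_trunc // fmul_finvl ?coef1 //.
by rewrite /fps_of_poly p0 unitr1.
Qed.

End FpsInverse.

Section GaussianBinomial.
Variable R : comNzRingType.

Fixpoint qbinom (n k : nat) : {poly R} :=
  match n, k with
  | 0, _ => (k == 0%N)%:R
  | n'.+1, 0 => 1
  | n'.+1, k'.+1 => qbinom n' k' + 'X^(k.*2) * qbinom n' k
  end.

Definition qpoch (n : nat) : {poly R} := \prod_(i < n) (1 - 'X^(i.+1.*2)).

Lemma qbinomn0 n : qbinom n 0 = 1. Proof. by case: n. Qed.

Lemma qbinomS n k : qbinom n.+1 k.+1 = qbinom n k + 'X^(k.+1.*2) * qbinom n k.+1.
Proof. by []. Qed.

Lemma qbinom_small n k : (n < k)%N -> qbinom n k = 0.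
Proof.
elim: n k => [|n IH] [|k] //= h.
by rewrite !IH ?mulr0 ?addr0 //; lia.
Qed.

Lemma qbinomS_rev n k :
  qbinom n.+1 k.+1 = 'X^((n - k).*2) * qbinom n k + qbinom n k.+1.
Proof.
elim: n k => [|n IH] [|k].
- by rewrite /= mulr0 !addr0 expr0 mul1r.
- by rewrite /= mulr0 addr0 mulr0 add0r.
- rewrite (qbinomS n.+1 0) [in LHS](IH 0%N) (qbinomS n 0) !qbinomn0 !subn0.
  rewrite !mulr1 !mulrDr -exprD.
  have -> : (1.*2 + n.*2 = n.+1.*2)%N by lia.
  ring.
- rewrite (qbinomS n.+1 k.+1) [in LHS]IH [in LHS]IH subSS [in RHS]qbinomS [in RHS]qbinomS.
  case: (ltnP n k.+1) => hk.
    rewrite (qbinom_small (k := k.+1)) // (qbinom_small (k := k.+2)) 1?ltnW //.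
    by rewrite !(mulr0, addr0).
  rewrite (mulrDr 'X^((n - k).*2)) mulrA -exprD (mulrDr 'X^(k.+2.*2)) mulrA -exprD.
  have -> : ((n - k).*2 + k.+1.*2 = n.+1.*2)%N by lia.
  have -> : (k.+2.*2 + (n - k.+1).*2 = n.+1.*2)%N by lia.
  ring.
Qed.

Lemma qbinomSS1 n :
  qbinom n.+2 1 = 1 + 'X^(n.+1.*2) + 'X^2 * qbinom n 1.
Proof.
rewrite qbinomS qbinomS_rev !qbinomn0 subn0 mulr1 mulrDr -exprD addrA.
by have -> : (2 + n.*2 = n.+1.*2)%N by lia.
Qed.

Lemma qbinomSS n k : qbinom n.+2 k.+2 =
  'X^((n - k).*2) * qbinom n k + (1 + 'X^(n.+1.*2)) * qbinom n k.+1
  + 'X^(k.+2.*2) * qbinom n k.+2.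
Proof.
rewrite qbinomS_rev subSS !qbinomS.
case: (ltnP n k.+1) => hk.
  rewrite (qbinom_small (k := k.+1)) // (qbinom_small (k := k.+2)) 1?ltnW //.
  by rewrite !(mulr0, addr0).
rewrite mulrDr mulrA -exprD.
have -> : ((n - k).*2 + k.+1.*2 = n.+1.*2)%N by lia.
ring.
Qed.

Lemma qpochS n : qpoch n.+1 = qpoch n * (1 - 'X^(n.+1.*2)).
Proof. by rewrite /qpoch big_ord_recr. Qed.

Lemma qpoch_coef0 n : (qpoch n)`_0 = 1.
Proof.
elim: n => [|n IH]; first by rewrite /qpoch big_ord0 coef1.
by rewrite qpochS coef0M IH coefB coef1 coefXn /= subr0 mulr1.
Qed.

Lemma qpoch_eqmodX n n' : (n <= n')%N -> eqmodX n.+1.*2 (qpoch n') (qpoch n).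
Proof.
elim: n' => [|n' IH]; first by rewrite leqn0 => /eqP ->.
rewrite leq_eqVlt => /orP[/eqP -> // | hn].
rewrite qpochS -[qpoch n]mulr1; apply: eqmodXM; first exact: IH.
by rewrite -mulN1r; apply: eqmodX_1DXn; lia.
Qed.

Lemma qbinom_qpoch n k : (k <= n)%N -> qbinom n k * qpoch k * qpoch (n - k) = qpoch n.
Proof.
elim: n k => [|n IH] [|k] hk //.
- by rewrite /qpoch !big_ord0 !mulr1.
- by rewrite qbinomn0 /qpoch big_ord0 !mul1r subn0.
rewrite qbinomS subSS qpochS [qpoch n.+1]qpochS.
case: (ltnP k n) => hkn; last first.
  have -> : k = n by lia.
  by rewrite (qbinom_small (k := n.+1)) // mulr0 addr0 -[in RHS](IH n) // subnn; ring.
have h1 := IH k (ltnW hkn); have h2 := IH k.+1 hkn.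
rewrite qpochS in h2.
have e : (n - k = (n - k.+1).+1)%N by lia.
rewrite e qpochS -e in h1 *.
have -> : qpoch n * (1 - 'X^(n.+1.*2)) = qpoch n * (1 - 'X^(k.+1.*2))
    + 'X^(k.+1.*2) * qpoch n * (1 - 'X^((n - k).*2)).
  have -> : (n.+1.*2 = k.+1.*2 + (n - k).*2)%N by lia.
  by rewrite exprD; ring.
by rewrite -{1}h1 -h2; ring.
Qed.

(* (q^2;q^2)_j, (q^2;q^2)_k and (q^2;q^2)_(n-k) all agree with (q^2;q^2)_l to this
   order, so [n, k] (q^2;q^2)_k (q^2;q^2)_(n-k) = (q^2;q^2)_n can be cancelled. *)
Lemma qpoch_qbinom_eqmodX n k j l : (k <= n)%N -> (l <= k)%N -> (l <= n - k)%N ->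
  (l <= j)%N -> eqmodX l.+1.*2 (qpoch j * qbinom n k) 1.
Proof.
move=> hkn hlk hlnk hlj; set w := qpoch l.
have ew j' : (l <= j')%N -> eqmodX l.+1.*2 (qpoch j') w by exact: qpoch_eqmodX.
apply: (@eqmodX_cancel _ _ _ _ (w * w)); first by rewrite coef0M qpoch_coef0 mulr1.
apply: (@eqmodX_trans _ _ _ (qpoch j * (qbinom n k * qpoch k * qpoch (n - k)))).
  rewrite !mulrA; apply: eqmodXM; [apply: eqmodXM; first exact: eqmodX_refl|];
    by apply/eqmodX_sym/ew.
by rewrite qbinom_qpoch // mul1r; apply: eqmodXM; apply: ew; lia.
Qed.

End GaussianBinomial.

Lemma sum_nat_trunc (V : nmodType) (F : nat -> V) m n : (m <= n)%N ->
  (forall i, (m <= i)%N -> F i = 0) ->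
  \sum_(0 <= i < n) F i = \sum_(0 <= i < m) F i.
Proof.
move=> hmn hF; rewrite (big_cat_nat (n := m)) //= [X in _ + X]big1_seq ?addr0 //.
by move=> i; rewrite mem_index_iota => /andP[_ /andP[hi _]]; apply: hF.
Qed.

Lemma sum_distn_sym (V : nmodType) (h : nat -> V) N :
  \sum_(0 <= i < N.*2.+1) h `|i - N|%N = h 0%N + (\sum_(0 <= n < N) h n.+1) *+ 2.
Proof.
rewrite (big_cat_nat (n := N)) //=; last by lia.
have -> : \sum_(0 <= i < N) h `|i - N|%N = \sum_(0 <= n < N) h n.+1.
  by rewrite big_nat_rev; apply: eq_big_nat => i /andP[_ hi] /=; congr h; lia.
have -> : \sum_(N <= i < N.*2.+1) h `|i - N|%N = \sum_(0 <= i < N.+1) h `|(i + N) - N|%N.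
  by rewrite -{1}[N]add0n big_addn (_ : N.*2.+1 - N = N.+1)%N //; lia.
rewrite big_nat_recl // mulr2n addrCA; congr (h _ + (_ + _)); first by lia.
by apply: eq_big_nat => i _; congr h; lia.
Qed.

Section FiniteJacobiTripleProduct.
Variables (R : comNzRingType) (u : R).

Fixpoint dickson (n : nat) : R :=
  match n with
  | 0 => 2%:R
  | 1 => u
  | (m.+1 as m1).+1 => u * dickson m1 - dickson m
  end.

Lemma dickson_distnS (i M : nat) :
  u * dickson `|i - M|%N = dickson `|i.+1 - M|%N + dickson `|i - M.+1|%N.
Proof.
have rec n : u * dickson n.+1 = dickson n.+2 + dickson n by rewrite /= addrNK.
case: (ltngtP i M) => h.
- have -> : `|i - M|%N = (`|i.+1 - M|%N).+1 by lia.
  by rewrite rec (addrC (dickson _.+2)); congr (dickson _ + dickson _); lia.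
- have -> : `|i - M|%N = (`|i - M.+1|%N).+1 by lia.
  by rewrite rec; congr (dickson _ + dickson _); lia.
- by subst i; rewrite distnn distSn distnS /= mulr_natr mulr2n.
Qed.

Definition jtp_factor (j : nat) : {poly R} :=
  1 + u%:P * 'X^(j.*2.+1) + 'X^((j.*2.+1).*2).

Definition jtp_coef (M i : nat) : {poly R} := qbinom R M.*2 i * 'X^(`|i - M|%N ^ 2).

Lemma jtp_coef_small M i : (M.*2 < i)%N -> jtp_coef M i = 0.
Proof. by move=> h; rewrite /jtp_coef qbinom_small // mul0r. Qed.

Lemma jtp_coefS0 M : jtp_coef M.+1 0 = 'X^(M.*2.+1) * jtp_coef M 0.
Proof.
rewrite /jtp_coef !qbinomn0 !mul1r -exprD; congr 'X^_.
have -> : `|0 - M.+1|%N = M.+1 by lia.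
have -> : `|0 - M|%N = M by lia.
rewrite !expnS expn0; lia.
Qed.

Lemma jtp_coefS1 M : jtp_coef M.+1 1 =
  (1 + 'X^((M.*2.+1).*2)) * jtp_coef M 0 + 'X^(M.*2.+1) * jtp_coef M 1.
Proof.
rewrite /jtp_coef doubleS qbinomSS1 qbinomn0 mul1r.
case: M => [|M]; first by rewrite /= !(mulr0, mul0r, addr0, expr0, mulr1).
have -> : `|1 - M.+2|%N = M.+1 by lia.
have -> : `|1 - M.+1|%N = M by lia.
have -> : 'X^(M.+1.*2.+1) * (qbinom R M.+1.*2 1 * 'X^(M ^ 2)) =
          qbinom R M.+1.*2 1 * ('X^2 * 'X^(M.+1 ^ 2)).
  by rewrite mulrCA -!exprD; congr (_ * 'X^_); rewrite !expnS expn0; lia.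
ring.
Qed.

Lemma jtp_coefSS M i : jtp_coef M.+1 i.+2 = 'X^(M.*2.+1) * jtp_coef M i +
  (1 + 'X^((M.*2.+1).*2)) * jtp_coef M i.+1 + 'X^(M.*2.+1) * jtp_coef M i.+2.
Proof.
case: (ltnP M.*2 i) => h; first by rewrite !jtp_coef_small ?(mulr0, addr0) //; lia.
rewrite /jtp_coef doubleS qbinomSS (_ : `|i.+2 - M.+1|%N = `|i.+1 - M|%N); last by lia.
have -> : 'X^(M.*2.+1) * (qbinom R M.*2 i * 'X^(`|i - M|%N ^ 2)) =
          qbinom R M.*2 i * ('X^((M.*2 - i).*2) * 'X^(`|i.+1 - M|%N ^ 2)).
  by rewrite mulrCA -!exprD; congr (_ * 'X^_); rewrite !expnS !expn0; nia.
have -> : 'X^(M.*2.+1) * (qbinom R M.*2 i.+2 * 'X^(`|i.+2 - M|%N ^ 2)) =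
          qbinom R M.*2 i.+2 * ('X^(i.+2.*2) * 'X^(`|i.+1 - M|%N ^ 2)).
  by rewrite mulrCA -!exprD; congr (_ * 'X^_); rewrite !expnS !expn0; nia.
ring.
Qed.

Lemma sum_jtp_coef_widen M n (h : nat -> {poly R}) : (M.*2 < n)%N ->
  \sum_(0 <= i < n) jtp_coef M i * h i = \sum_(0 <= i < M.*2.+1) jtp_coef M i * h i.
Proof. by move=> hn; apply: sum_nat_trunc => // i hi; rewrite jtp_coef_small ?mul0r. Qed.

Lemma sum_jtp_coefS M (g : nat -> {poly R}) :
  \sum_(0 <= i < M.+1.*2.+1) jtp_coef M.+1 i * g i =
  \sum_(0 <= i < M.*2.+1) jtp_coef M i *
     ('X^(M.*2.+1) * (g i.+2 + g i) + (1 + 'X^((M.*2.+1).*2)) * g i.+1).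
Proof.
have E0 : \sum_(0 <= i < M.*2.+1) jtp_coef M i * g i = jtp_coef M 0 * g 0%N
    + jtp_coef M 1 * g 1%N + \sum_(0 <= i < M.*2.+1) jtp_coef M i.+2 * g i.+2.
  rewrite -(sum_jtp_coef_widen (n := M.*2.+3)); last lia.
  by rewrite big_nat_recl // big_nat_recl // addrA.
have E1 : \sum_(0 <= i < M.*2.+1) jtp_coef M i * g i.+1 = jtp_coef M 0 * g 1%N
    + \sum_(0 <= i < M.*2.+1) jtp_coef M i.+1 * g i.+2.
  rewrite -(sum_jtp_coef_widen (n := M.*2.+2) (fun i => g i.+1)); last lia.
  by rewrite big_nat_recl.
rewrite doubleS big_nat_recl // big_nat_recl // jtp_coefS0 jtp_coefS1.
set a := 'X^(M.*2.+1); set b := 1 + 'X^((M.*2.+1).*2).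
rewrite (eq_bigr (fun i => a * (jtp_coef M i * g i.+2) + b * (jtp_coef M i.+1 * g i.+2)
    + a * (jtp_coef M i.+2 * g i.+2))); last by move=> i _; rewrite jtp_coefSS -/a -/b; ring.
rewrite [RHS](eq_bigr (fun i => a * (jtp_coef M i * g i.+2) + a * (jtp_coef M i * g i)
    + b * (jtp_coef M i * g i.+1))); last by move=> i _; ring.
rewrite !big_split /= -!mulr_sumr E0 E1; ring.
Qed.

Lemma finite_jtp M : 2%:R * \prod_(j < M) jtp_factor j =
  \sum_(0 <= i < M.*2.+1) jtp_coef M i * (dickson `|i - M|%N)%:P.
Proof.
elim: M => [|M IH].
  by rewrite big_ord0 mulr1 big_nat1 /jtp_coef /= mul1r expr0 mul1r polyC_natr.
rewrite big_ord_recr /= mulrA IH sum_jtp_coefS big_distrl /=.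
apply: eq_bigr => i _; rewrite -mulrA; congr (_ * _).
have -> : `|i.+2 - M.+1|%N = `|i.+1 - M|%N by lia.
have -> : `|i.+1 - M.+1|%N = `|i - M|%N by lia.
rewrite -polyCD -dickson_distnS polyCM /jtp_factor; ring.
Qed.

Lemma qpoch_jtp_coef N i : (i <= N.*2)%N ->
  eqmodX N.+1 (qpoch R N * jtp_coef N i) 'X^(`|i - N|%N ^ 2).
Proof.
move=> hi; set s := `|i - N|%N.
have key : eqmodX (N - s).+1.*2 (qpoch R N * qbinom R N.*2 i) 1.
  by apply: qpoch_qbinom_eqmodX; rewrite /s; lia.
rewrite /jtp_coef mulrA; apply: (eqmodX_le _ (eqmodX_mulXn (n := s ^ 2) key)).
rewrite /s !expnS expn0; nia.
Qed.

Lemma coef_qpoch_jtp N k : (k <= N)%N ->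
  2%:R * (qpoch R N * \prod_(j < N) jtp_factor j)`_k =
  2%:R * ((k == 0%N)%:R + \sum_(1 <= n < k.+1 | n * n == k) dickson n).
Proof.
move=> hk; rewrite -coefCM polyC_natr mulrCA finite_jtp mulr_sumr coef_sum.
rewrite (eq_big_nat _ _ (F2 := fun i => (k == `|i - N| ^ 2)%N%:R * dickson `|i - N|%N));
  last first.
  move=> i /andP[_ hi]; rewrite mulrA coefMC qpoch_jtp_coef ?coefXn //; lia.
rewrite (sum_distn_sym (fun n => (k == n ^ 2)%N%:R * dickson n)).
rewrite [RHS]mulr_natl mulrnDl mulr_natr; congr (_ + _ *+ 2).
rewrite [RHS]big_add1 [RHS]big_mkcond (@sum_nat_trunc _ _ k N) //.
  apply: eq_big_nat => n _; rewrite -mulnn eq_sym.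
  by case: eqP; rewrite ?mul1r ?mul0r.
move=> n hn; have -> : (k == n.+1 ^ 2)%N = false by apply/eqP; nia.
exact: mul0r.
Qed.

End FiniteJacobiTripleProduct.

Lemma chebT0 : chebT 0 = 1. Proof. by []. Qed.

Lemma chebT1 : chebT 1 = 'X. Proof. by []. Qed.

Lemma chebTSS m : chebT m.+2 = 2%:R * 'X * chebT m.+1 - chebT m.
Proof.
have snd k : (cheb_pair k).2 = chebT k.+1 by rewrite /chebT /=; case: (cheb_pair k).
rewrite -snd /= -snd /chebT; case: (cheb_pair m) => p q /=.
by rewrite -mul_polyC polyC_natr.
Qed.

Lemma chebT_double n : chebT n.*2 = chebT n \Po chebT 2.
Proof.
have T4 m : chebT m.+4 = 2%:R * chebT 2 * chebT m.+2 - chebT m.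
  by rewrite !chebTSS chebT0 chebT1; ring.
suff : chebT n.*2 = chebT n \Po chebT 2 /\ chebT n.+1.*2 = chebT n.+1 \Po chebT 2 by case.
elim: n => [|n [IH1 IH2]]; first by rewrite chebT0 comp_polyC chebT1 comp_polyX.
split=> //; rewrite !doubleS T4 -doubleS IH1 IH2 (chebTSS n).
by rewrite comp_polyB !comp_polyM comp_polyX -polyC_natr comp_polyC.
Qed.

Lemma even_poly_comp_polyX2 (R : nzRingType) (p : {poly R}) : even_poly (p \Po 'X^2) = p.
Proof.
apply/polyP => i; rewrite coef_even_poly coef_comp_poly_Xn //.
by rewrite -muln2 dvdn_mull // mulnK.
Qed.

Lemma te_chebT n : te n = chebT n \Po (2%:R * 'X - 1).
Proof.
rewrite /te chebT_double.
have -> : chebT 2 = (2%:R * 'X - 1) \Po 'X^2.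
  rewrite chebTSS chebT0 chebT1 comp_polyB comp_polyM comp_polyX -polyC_natr.
  by rewrite !comp_polyC mulrA.
by rewrite comp_polyA even_poly_comp_polyX2.
Qed.

Lemma chebT_dickson (p : {poly rat}) n : 2%:R * (chebT n \Po (2%:R^-1 *: p)) = dickson p n.
Proof.
set v := 2%:R^-1 *: p.
have hv : 2%:R * v = p.
  by rewrite /v -mul_polyC mulrA -polyC_natr -polyCM mulfV ?mul1r // pnatr_eq0.
suff : 2%:R * (chebT n \Po v) = dickson p n /\
       2%:R * (chebT n.+1 \Po v) = dickson p n.+1 by case.
elim: n => [|n [IH1 IH2]].
  by rewrite chebT0 chebT1 comp_polyX hv -polyC1 comp_polyC polyC1 mulr1.
split=> //; rewrite chebTSS comp_polyB !comp_polyM comp_polyX -polyC_natr comp_polyC.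
have -> : dickson p n.+2 = p * dickson p n.+1 - dickson p n by [].
rewrite polyC_natr -IH1 -IH2 -hv; ring.
Qed.

Lemma te_dickson (p : {poly rat}) n :
  2%:R * (te n \Po (4%:R^-1 *: (p + 2%:R))) = dickson p n.
Proof.
rewrite te_chebT -comp_polyA -chebT_dickson; congr (_ * (_ \Po _)).
rewrite comp_polyB comp_polyM comp_polyX -polyC_natr comp_polyC -polyC1 comp_polyC.
rewrite -!mul_polyC mulrA -polyCM mulrDr -polyCM -addrA -polyCB.
have -> : (2%:R * 4%:R^-1 * 2%:R - 1 = 0 :> rat) by field.
by rewrite addr0; congr (_%:P * p); field.
Qed.

Lemma Sser_dickson (a : int) k :
  Sser a k = (k == 0%N)%:R + \sum_(1 <= n < k.+1 | n * n == k) dickson ('X + (a%:~R)%:P) n.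
Proof.
rewrite /Sser mulr_sumr; congr (_ + _); apply: eq_bigr => n _.
by rewrite -te_dickson intrD polyCD addrA (rmorph_int (@polyC rat) 2).
Qed.

Lemma big_nat_odd (R : Type) (idx : R) (op : Monoid.law idx) (F : nat -> R) M :
  \big[op/idx]_(0 <= i < M.*2.+1 | odd i) F i = \big[op/idx]_(0 <= j < M) F j.*2.+1.
Proof.
rewrite big_mkcond /=; elim: M => [|M IH]; first by rewrite big_nat1 big_geq.
rewrite doubleS (big_nat_recr M.*2.+2) // (big_nat_recr M.*2.+1) // [RHS]big_nat_recr //= IH.
by rewrite odd_double /= Monoid.mulm1.
Qed.

Section GeneratingProduct.
Variables (a : int) (N : nat).

Local Notation lift := (map_poly (@polyC rat)).

Definition den n : {poly rat} := 1 + a%:~R *: 'X^n + 'X^(n.*2).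

Definition den_inv n := fps_trunc N (Defs.finv (fps_of_poly (den n))).

Definition euler_inv n :=
  fps_trunc N (Defs.finv (fps_of_poly (1 - 'X^(n.*2) : {poly rat}))).

Lemma den_invP n : (0 < n)%N -> eqmodX N.+1 (den_inv n * den n) 1.
Proof.
move=> hn; apply: fps_trunc_finv; rewrite /den !coefD coefZ !coefXn coef1.
have -> : (0 == n)%N = false by rewrite eq_sym eqn0Ngt hn.
have -> : (0 == n.*2)%N = false by rewrite eq_sym eqn0Ngt double_gt0 hn.
by rewrite mulr0 !addr0.
Qed.

Lemma euler_invP n : (0 < n)%N -> eqmodX N.+1 (euler_inv n * (1 - 'X^(n.*2))) 1.
Proof.
move=> hn; apply: fps_trunc_finv; rewrite coefB coefXn coef1.
have -> : (0 == n.*2)%N = false by rewrite eq_sym eqn0Ngt double_gt0 hn.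
by rewrite subr0.
Qed.

Lemma den_eqmodX1 n m : (m <= n)%N -> eqmodX m (den n) 1.
Proof.
move=> hmn; have -> : den n = 1 + ((a%:~R)%:P + 'X^n) * 'X^n.
  by rewrite /den -mul_polyC mulrDl -exprD addnn addrA.
exact: eqmodX_1DXn.
Qed.

Lemma den_inv_eqmodX1 n m : (0 < n)%N -> (m <= n)%N -> (m <= N.+1)%N ->
  eqmodX m (den_inv n) 1.
Proof.
move=> hn hmn hmN; apply: (eqmodX_inv1 (d := den n)); last exact: den_eqmodX1.
exact: eqmodX_le hmN (den_invP hn).
Qed.

Lemma euler_inv_eqmodX1 n m : (0 < n)%N -> (m <= n.*2)%N -> (m <= N.+1)%N ->
  eqmodX m (euler_inv n) 1.
Proof.
move=> hn hmn hmN; apply: (eqmodX_inv1 (d := 1 - 'X^(n.*2))).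
  exact: eqmodX_le hmN (euler_invP hn).
by rewrite -mulN1r; apply: eqmodX_1DXn.
Qed.

Lemma fps_trunc_ufac i : eqmodX N.+1 (fps_trunc N (ufac a i)) ('X^i * den_inv i).
Proof.
apply: eqmodX_trans (fps_truncM _ _) _.
by apply: eqmodXM; [exact: fps_trunc_poly | exact: eqmodX_refl].
Qed.

Lemma fps_trunc_pfac n :
  eqmodX N.+1 (fps_trunc N (pfac a n)) (den_inv n.*2.-1 * euler_inv n).
Proof. exact: fps_truncM. Qed.

Lemma Pprod_coef i : (i <= N)%N ->
  Pprod a i = (\prod_(1 <= n < N.+1) fps_trunc N (pfac a n))`_i.
Proof.
move=> hi; rewrite /Pprod (coef_big_fmul (N := N)) //.
suff : eqmodX i.+1 (\prod_(1 <= n < i.+1) fps_trunc N (pfac a n))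
                   (\prod_(1 <= n < N.+1) fps_trunc N (pfac a n)) by apply.
rewrite [X in eqmodX _ _ X](big_cat_nat (n := i.+1)) //=.
rewrite -[X in eqmodX _ X _]mulr1; apply: eqmodXM; first exact: eqmodX_refl.
rewrite big_nat_cond; apply: eqmodX_sym; apply: eqmodX_prod1 => n /andP[/andP[hn1 _] _].
apply: eqmodX_trans (eqmodX_le _ (fps_trunc_pfac n)) _; first lia.
by rewrite -(mulr1 1); apply: eqmodXM; [apply: den_inv_eqmodX1 | apply: euler_inv_eqmodX1];
  lia.
Qed.

Lemma rhs_coef : rhs a N =
  (lift (\prod_(1 <= n < N.+1) fps_trunc N (pfac a n)) * \poly_(k < N.+1) Sser a k)`_N.
Proof.
rewrite /rhs coefM; apply: eq_bigr => -[i /= hi] _.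
rewrite coef_map coef_poly Pprod_coef; last by lia.
by have -> : (N - i < N.+1)%N by lia.
Qed.

(* Expanding the product, x^t collects the t-element sets of odd indices. *)
Lemma Ucoef_prod t : Ucoef a t N =
  ((\prod_(i : 'I_N.+1 | odd i) (1 + 'X%:P * lift (fps_trunc N (ufac a i))))`_N)`_t.
Proof.
set x : {poly {poly rat}} := 'X%:P; set U := fun i => fps_trunc N (ufac a i).
rewrite big_mkcond.
rewrite (eq_bigr (fun i : 'I_N.+1 => (if odd i then x * lift (U i) else 0) + 1)); last first.
  by move=> i _; case: (odd i); rewrite ?add0r // addrC.
rewrite bigA_distr !coef_sum /Ucoef big_mkcond /=; apply: eq_bigr => S _.
rewrite -big_mkcond /= (coef_big_fmul (N := N)) //.
case: (boolP [forall i in S, odd i]) => hS; last first.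
  move/forall_inPn: hS => [i hiS hodd].
  by rewrite andbF (bigD1 i hiS) /= (negbTE hodd) mul0r !coef0.
have -> : \prod_(i in S) (if odd i then x * lift (U i) else 0) =
    ('X ^+ #|S|)%:P * lift (\prod_(i in S) U i).
  rewrite rmorph_prod polyC_exp -prodr_const -big_split /=.
  by apply: eq_bigr => i hi; rewrite (forall_inP hS i hi).
rewrite andbT coefCM coef_map coefMC coefXn eq_sym.
by case: eqP; rewrite ?mul1r ?mul0r.
Qed.

Local Notation u := ('X + (a%:~R)%:P).

Lemma ufac_factor_eqmodX j : eqmodX N.+1
  (1 + 'X%:P * lift (fps_trunc N (ufac a j.*2.+1)))
  (lift (den_inv j.*2.+1) * jtp_factor u j).
Proof.
set i := j.*2.+1.
have -> : jtp_factor u j = lift (den i) + 'X%:P * 'X^i.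
  rewrite /jtp_factor /den -mul_polyC !rmorphD rmorphM rmorph1 /= map_polyC !map_polyXn.
  rewrite -/i; ring.
rewrite mulrDr mulrCA; apply: eqmodXD.
  by rewrite -rmorphM -(rmorph1 lift); apply/eqmodX_map/eqmodX_sym/den_invP.
apply: eqmodXM; first exact: eqmodX_refl.
rewrite [X in eqmodX _ _ X]mulrC -(map_polyXn (@polyC rat)) -rmorphM.
exact/eqmodX_map/fps_trunc_ufac.
Qed.

Lemma ufac_prod_jtp_eqmodX : eqmodX N.+1
  (\prod_(i : 'I_N.+1 | odd i) (1 + 'X%:P * lift (fps_trunc N (ufac a i))))
  (\prod_(j < N) lift (den_inv j.*2.+1) * \prod_(j < N) jtp_factor u j).
Proof.
set F := fun i => 1 + 'X%:P * lift (fps_trunc N (ufac a i)).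
have F1 i : (N < i)%N -> eqmodX N.+1 (F i) 1.
  move=> hi; apply: (@eqmodX_trans _ _ _ (1 + 'X%:P * lift 0)); last first.
    by rewrite rmorph0 mulr0 addr0; exact: eqmodX_refl.
  apply: eqmodXD; first exact: eqmodX_refl.
  apply: eqmodXM; first exact: eqmodX_refl.
  apply/eqmodX_map/(eqmodX_trans (fps_trunc_ufac i)).
  by rewrite -(mul0r (den_inv i)); apply: eqmodXM; [exact: eqmodX_Xn | exact: eqmodX_refl].
rewrite -(big_mkord (fun i => odd i) F) -big_split /=.
apply: (@eqmodX_trans _ _ _ (\prod_(0 <= i < N.*2.+1 | odd i) F i)).
  rewrite [X in eqmodX _ _ X](big_cat_nat (n := N.+1)) //=; try lia.
  rewrite -[X in eqmodX _ X _]mulr1; apply: eqmodXM; first exact: eqmodX_refl.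
  rewrite big_nat_cond; apply/eqmodX_sym/eqmodX_prod1 => i /andP[/andP[hi _] _].
  exact: F1.
by rewrite big_nat_odd big_mkord; apply: eqmodX_prod => j _; apply: ufac_factor_eqmodX.
Qed.

Lemma Pprod_eqmodX : eqmodX N.+1 (lift (\prod_(1 <= n < N.+1) fps_trunc N (pfac a n)))
  (\prod_(j < N) lift (den_inv j.*2.+1) * \prod_(j < N) lift (euler_inv j.+1)).
Proof.
rewrite -!rmorph_prod -rmorphM; apply: eqmodX_map.
rewrite -big_split big_add1 big_mkord /=.
by apply: eqmodX_prod => n _; apply: fps_trunc_pfac.
Qed.

Lemma euler_inv_qpoch :
  eqmodX N.+1 (\prod_(j < N) lift (euler_inv j.+1) * qpoch {poly rat} N) 1.
Proof.
rewrite /qpoch -big_split /=; apply: eqmodX_prod1 => j _.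
have -> : 1 - 'X^(j.+1.*2) = lift (1 - 'X^(j.+1.*2)).
  by rewrite rmorphB rmorph1 /= map_polyXn.
by rewrite -rmorphM -(rmorph1 lift); apply/eqmodX_map/euler_invP.
Qed.

Lemma qpoch_jtp_Sser :
  eqmodX N.+1 (qpoch {poly rat} N * \prod_(j < N) jtp_factor u j) (\poly_(k < N.+1) Sser a k).
Proof.
move=> k hk; rewrite coef_poly hk Sser_dickson; apply: (@mulfI _ 2%:R).
  by rewrite -polyC_natr polyC_eq0 pnatr_eq0.
by apply: (coef_qpoch_jtp (R := {poly rat})); rewrite -ltnS.
Qed.

Lemma ufac_prod_rhs_eqmodX : eqmodX N.+1
  (\prod_(i : 'I_N.+1 | odd i) (1 + 'X%:P * lift (fps_trunc N (ufac a i))))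
  (lift (\prod_(1 <= n < N.+1) fps_trunc N (pfac a n)) * \poly_(k < N.+1) Sser a k).
Proof.
apply: (eqmodX_trans ufac_prod_jtp_eqmodX).
apply: (eqmodX_trans _ (eqmodXM (eqmodX_sym Pprod_eqmodX) qpoch_jtp_Sser)).
rewrite !mulrA; apply: eqmodXM; last exact: eqmodX_refl.
rewrite -mulrA -[X in eqmodX _ X _]mulr1; apply: eqmodXM; first exact: eqmodX_refl.
exact/eqmodX_sym/euler_inv_qpoch.
Qed.

End GeneratingProduct.

Unset Implicit Arguments.

Theorem mainTheorem1 (a : int) (ha : (-2 <= a <= 2)%R) (t N : nat) :
  Ucoef a t N = (rhs a N)`_t.
Proof. by rewrite Ucoef_prod rhs_coef (ufac_prod_rhs_eqmodX a (ltnSn N)). Qed.
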